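(* Consider the weighted median search process described in the context, with initial weights satisfying $\omega_0(V)=1$. For every $\tau\ge 0$ and any sequence of answers, $$\omega_\tau(V\setminus\{x_\tau\})\le\frac{1}{2^\tau},$$ where $x_\tau$ is a heaviest vertex with respect to $\omega_\tau$ (i.e., $\omega_\tau(x_\tau)\ge\omega_\tau(u)$ for all $u\in V$, ties broken arbitrarily).
   Context: $G=(V,E)$ is a connected undirected unweighted graph, $0<p<\frac12$, $d(u,v)$ is the graph distance. Positive weights $\omega_t(v)$ are maintained, with $\omega(U)=\sum_{u\in U}\omega(u)$; a vertex $v$ is heavy (w.r.t. $\omega$) if $\omega(v)/\omega(V)\ge\frac12$. A median w.r.t. $\omega$ is a vertex $q$ minimizing $\sum_{u\in V}d(u,q)\omega(u)$. In step $t$ the process queries a median $q$ w.r.t. $\omega_{t-1}$, where a heavy vertex is chosen whenever one exists (a heavy vertex is always a median). The answer is either ''yes'' or a neighbor $u$ of $q$ (a ''no-answer''). A vertex $v$ is compatible with the answer if: for a yes-answer, $v=q$; for a no-answer $u$ with $q$ not heavy, $u$ lies on a shortest $q$–$v$ path; for a no-answer with $q$ heavy, $v\neq q$. Bayesian update: $\omega_t(v)=(1-p)\omega_{t-1}(v)$ if $v$ is compatible and $\omega_t(v)=p\,\omega_{t-1}(v)$ otherwise. *)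

From mathcomp Require Import all_boot all_order all_algebra.
Set Implicit Arguments. Unset Strict Implicit. Unset Printing Implicit Defensive.
Import Order.TTheory GRing.Theory Num.Theory.
Local Open Scope ring_scope.

Section Graph.
Variable T : finType.
Variable e : rel T.

Fixpoint gball (n : nat) (u : T) : {set T} :=
  if n is n'.+1 then gball n' u :|: [set y | [exists x in gball n' u, e x y]]
  else [set u].

(* graph distance: least n with v within n steps of u (#|T| if unreachable) *)
Definition gdist (u v : T) : nat := find (fun n => v \in gball n u) (iota 0 #|T|).

Definition connected_graph : Prop := forall u v, connect e u v.
End Graph.

Section Process.
Variable R : realFieldType.
Variable T : finType.
Variable e : rel T.

Definition wtot (w : T -> R) : R := \sum_(v : T) w v.

Definition heavy (w : T -> R) (v : T) : bool := w v / wtot w >= 1 / 2.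

Definition median (w : T -> R) (q : T) : Prop :=
  forall y : T, \sum_(u : T) (gdist e u q)%:R * w u <= \sum_(u : T) (gdist e u y)%:R * w u.

(* answer: None = "yes", Some u = no-answer pointing to neighbour u *)
Definition compatible (w : T -> R) (q : T) (a : option T) (v : T) : bool :=
  match a with
  | None => v == q
  | Some u => if heavy w q then v != q
              else gdist e q v == (gdist e u v).+1
  end.

(* one step: from weights w (= omega_{t-1}) query q, answer a, produce w' (= omega_t) *)
Definition valid_step (p : R) (w : T -> R) (q : T) (a : option T) (w' : T -> R) : Prop :=
  median w q /\
  ((exists v, heavy w v) -> heavy w q) /\
  (forall u, a = Some u -> e q u) /\
  (forall v, w' v = (if compatible w q a v then 1 - p else p) * w v).
End Process.

(* The proof tracks the potential
     psi(W, M) = 4 (W - M) M  if the heaviest weight M is at least W / 2,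
     psi(W, M) = W^2          otherwise,
   where W is the total weight.  It dominates the square of the weight D = W - M
   outside a heaviest vertex, and it drops by a factor 4 at every step.  If no
   vertex is heavy, the median property makes the answer compatible with at most
   half of the weight, so W at least halves.  If the queried vertex is heavy, it
   is the heaviest one, and after either answer the product of the new weights of
   q and of V \ q is p (1 - p) M D <= M D / 4. *)

From mathcomp Require Import all_boot all_order all_algebra.
From mathcomp Require Import lra.
Set Implicit Arguments. Unset Strict Implicit. Unset Printing Implicit Defensive.
Import Order.TTheory GRing.Theory Num.Theory.
Local Open Scope ring_scope.

Section GraphDistance.
Variables (T : finType) (e : rel T).

Lemma gballS n u v : v \in gball e n u -> v \in gball e n.+1 u.
Proof. by move=> hv; rewrite /= in_setU hv. Qed.

Lemma gball1 x y : e x y -> y \in gball e 1 x.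
Proof.
move=> exy; rewrite /= in_setU; apply/orP; right.
by rewrite inE; apply/existsP; exists x; rewrite in_set1 eqxx.
Qed.

Lemma gball_trans m n u x v :
  x \in gball e n u -> v \in gball e m x -> v \in gball e (n + m) u.
Proof.
elim: m v => [|m IH] v hx /=; first by rewrite in_set1 addn0 => /eqP ->.
rewrite addnS /= !in_setU => /orP [hv | ]; first by rewrite (IH _ hx hv).
rewrite inE => /existsP [y /andP [hy eyv]].
by rewrite inE; apply/orP; right; apply/existsP; exists y; rewrite (IH _ hx hy).
Qed.

Lemma gball_sym : symmetric e -> forall n u v, v \in gball e n u -> u \in gball e n v.
Proof.
move=> e_sym; elim=> [|n IH] u v; first by rewrite /= !in_set1 eq_sym.
case/setUP => [hv | ]; first exact/gballS/IH.
rewrite inE => /existsP [x /andP [hx exv]].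
by rewrite -add1n; apply: gball_trans (IH _ _ hx); apply: gball1; rewrite e_sym.
Qed.

Lemma gdist_sym : symmetric e -> forall u v, gdist e u v = gdist e v u.
Proof. by move=> e_sym u v; apply: eq_find => n; apply/idP/idP; apply: gball_sym. Qed.

Lemma gdist_le_size u v : (gdist e u v <= #|T|)%N.
Proof. by rewrite -[X in (_ <= X)%N](size_iota 0) find_size. Qed.

Lemma gdist_le n u v : v \in gball e n u -> (gdist e u v <= n)%N.
Proof.
move=> hv; rewrite leqNgt; apply/negP => hlt.
have hn : (n < #|T|)%N := leq_trans hlt (gdist_le_size u v).
by move: (before_find 0%N hlt); rewrite nth_iota // add0n hv.
Qed.

Lemma mem_gball_gdist u v : (gdist e u v < #|T|)%N -> v \in gball e (gdist e u v) u.
Proof.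
move=> hlt; have hhas : has (fun n => v \in gball e n u) (iota 0 #|T|).
  by rewrite has_find size_iota.
by move: (nth_find 0%N hhas); rewrite nth_iota // add0n.
Qed.

Lemma gdist_edge q u v : e q u -> (gdist e v u <= (gdist e v q).+1)%N.
Proof.
move=> equ; case: (ltnP (gdist e v q) #|T|) => hq.
  rewrite -addn1; apply: gdist_le.
  by apply: gball_trans _ (gball1 equ); apply: mem_gball_gdist.
exact: leq_trans (gdist_le_size v u) (leq_trans hq (leqnSn _)).
Qed.

End GraphDistance.

Section Potential.
Variable R : realFieldType.

Definition psi (W M : R) : R := if W <= 2 * M then 4 * (W - M) * M else W ^+ 2.

Lemma psi_le_sqr (W M : R) : psi W M <= W ^+ 2.
Proof. by rewrite /psi; case: ifP => _ //; have := sqr_ge0 (W - 2 * M); nra. Qed.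

(* On [W/2, +oo) the map z |-> 4 (W - z) z is nonincreasing. *)
Lemma psi_le_heavy (W M z : R) : z <= M -> W <= 2 * z -> psi W M <= 4 * (W - z) * z.
Proof.
move=> zM Wz; rewrite /psi ifT; last by lra.
have : 0 <= (M - z) * (M + z - W) by apply: mulr_ge0; lra.
nra.
Qed.

Lemma sqr_le_psi (D M : R) : 0 <= D -> 0 <= M -> D ^+ 2 <= psi (M + D) M.
Proof. by move=> D0 M0; rewrite /psi; case: ifP => hM; nra. Qed.

Lemma psi_after_yes (p m D M' : R) : 0 < p -> p < 1 / 2 ->
  0 <= D -> D <= m -> (1 - p) * m <= M' ->
  psi ((1 - p) * m + p * D) M' <= m * D.
Proof.
move=> p_gt0 p_lt_half D0 Dm hM'; have m0 : 0 <= m by lra.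
have pDm : p * D <= p * m by rewrite ler_wpM2l // ltW.
have pm : p * m <= (1 - p) * m by rewrite ler_wpM2r //; lra.
apply: le_trans (psi_le_heavy hM' _) _; first by lra.
have : 0 <= (1 - 4 * p * (1 - p)) * (D * m) by apply: mulr_ge0; nra.
nra.
Qed.

Lemma psi_after_no (p m D M' : R) : 0 < p -> p < 1 / 2 ->
  0 <= D -> D <= m -> p * m <= M' ->
  psi (p * m + (1 - p) * D) M' <= m * D.
Proof.
move=> p_gt0 p_lt_half D0 Dm hM'; have m0 : 0 <= m by lra.
case: (lerP ((1 - p) * D) (p * m)) => hD.
  apply: le_trans (psi_le_heavy hM' _) _; first by lra.
  have : 0 <= (1 - 4 * p * (1 - p)) * (D * m) by apply: mulr_ge0; nra.
  nra.
apply: le_trans (psi_le_sqr _ _) _.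
have f1 : p ^+ 2 * m <= (1 - p) ^+ 2 * D.
  have : p * D <= (1 - p) * D by rewrite ler_wpM2r //; lra.
  have : p * (p * m) <= p * ((1 - p) * D) by rewrite ler_wpM2l ?ltW.
  nra.
have : 0 <= (m - D) * ((1 - p) ^+ 2 * D - p ^+ 2 * m) by apply: mulr_ge0; lra.
nra.
Qed.

End Potential.

Section Weights.
Variables (R : realFieldType) (T : finType) (w : T -> R).
Hypothesis w_gt0 : forall v, 0 < w v.

Lemma wtot_bigD1 v : wtot w = w v + \sum_(u | u != v) w u.
Proof. exact: bigD1. Qed.

Lemma sum_neq_ge0 v : 0 <= \sum_(u | u != v) w u.
Proof. by apply: sumr_ge0 => u _; apply: ltW. Qed.

Lemma wtot_gt0 (v : T) : 0 < wtot w.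
Proof. by rewrite (wtot_bigD1 v); apply: ltr_wpDr (w_gt0 v); apply: sum_neq_ge0. Qed.

Lemma heavyE v : heavy w v = (wtot w <= 2 * w v).
Proof. by rewrite /heavy ler_pdivlMr ?(wtot_gt0 v) //; apply/idP/idP; lra. Qed.

Lemma heavy_max v : heavy w v -> forall u, w u <= w v.
Proof.
rewrite heavyE (wtot_bigD1 v) => hv u; case: (eqVneq u v) => [-> // | uv].
have : w u <= \sum_(u | u != v) w u.
  by rewrite (bigD1 u) //= lerDl; apply: sumr_ge0 => i _; apply: ltW.
lra.
Qed.

End Weights.

Lemma exists_max (R : realFieldType) (T : finType) (f : T -> R) (x0 : T) :
  exists x, forall u, f u <= f x.
Proof.
by case: (arg_maxP f (isT : predT x0)) => x _ x_max; exists x => u; apply: x_max.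
Qed.

Section Step.
Variables (R : realFieldType) (T : finType) (e : rel T).
Hypothesis e_sym : symmetric e.
Variables (p : R) (w w' : T -> R) (q : T) (a : option T).
Hypotheses (p_gt0 : 0 < p) (p_lt_half : p < 1 / 2) (w_gt0 : forall v, 0 < w v).
Hypothesis step : valid_step e p w q a w'.

Local Notation compat := (compatible e w q a).

Lemma step_gt0 v : 0 < w' v.
Proof.
have [_ [_ [_ ->]]] := step.
apply: mulr_gt0 => //; case: ifP => _ //.
by rewrite subr_gt0 (lt_trans p_lt_half) //; lra.
Qed.

Lemma wtot_step :
  wtot w' = (1 - p) * \sum_(v | compat v) w v + p * \sum_(v | ~~ compat v) w v.
Proof.
have [_ [_ [_ hw']]] := step.
rewrite /wtot (bigID compat) /= !mulr_sumr.
by congr (_ + _); apply: eq_bigr => v hv; rewrite hw' ?hv ?(negbTE hv).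
Qed.

(* Moving the query from q to the answered neighbour u shortens exactly the
   distances to the compatible vertices, and lengthens the others by at most 1. *)
Lemma median_compatible_le : ~~ heavy w q ->
  \sum_(v | compat v) w v <= \sum_(v | ~~ compat v) w v.
Proof.
have [med [_ [edge _]]] := step; move=> light.
case ha : a => [u|]; last first.
  rewrite /compatible big_pred1_eq.
  have : 2 * w q < wtot w by rewrite ltNge -(heavyE w_gt0).
  rewrite (wtot_bigD1 w q).
  lra.
have shift : \sum_v (gdist e v u)%:R * w v <=
    \sum_v ((gdist e v q)%:R * w v + (if compat v then - w v else w v)).
  apply: ler_sum => v _; rewrite /compatible ha (negbTE light).
  have wv := w_gt0 v; case: eqP => [closer | _].
    have -> : gdist e v q = (gdist e v u).+1 by rewrite !(gdist_sym e_sym v) closer.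
    by rewrite -natr1; lra.
  have : (gdist e v u)%:R <= (gdist e v q)%:R + 1 :> R.
    by rewrite natr1 ler_nat (gdist_edge _ (edge u ha)).
  nra.
have signed : \sum_v (if compat v then - w v else w v) =
    \sum_(v | ~~ compat v) w v - \sum_(v | compat v) w v.
  rewrite (bigID compat) /= addrC -sumrN.
  by congr (_ + _); apply: eq_bigr => v hv; rewrite ?hv ?(negbTE hv).
move: (med u) shift; rewrite big_split /= signed /compatible ha.
lra.
Qed.

Lemma wtot_halves : ~~ heavy w q -> 2 * wtot w' <= wtot w.
Proof.
move=> light; have := median_compatible_le light; have := p_lt_half.
rewrite wtot_step.
set C := \sum_(v | compat v) w v; set I := \sum_(v | ~~ compat v) w v => hp hCI.
have -> : wtot w = C + I by rewrite /wtot (bigID compat).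
have : 0 <= (1 - 2 * p) * (I - C) by apply: mulr_ge0; lra.
nra.
Qed.

Lemma psi_step_heavy y : heavy w q -> (forall u, w' u <= w' y) ->
  psi (wtot w') (w' y) <= w q * \sum_(v | v != q) w v.
Proof.
move=> hq y_max; have [_ [_ [_ hw']]] := step.
have Dm : \sum_(v | v != q) w v <= w q.
  by move: hq; rewrite (heavyE w_gt0) (wtot_bigD1 w q); lra.
have D0 := sum_neq_ge0 w_gt0 q.
move: (y_max q); rewrite wtot_step hw' /compatible.
case: a => [u|]; rewrite ?hq eqxx /=.
  under [X in p * X]eq_bigl do rewrite negbK.
  by rewrite big_pred1_eq addrC => /(psi_after_no p_gt0 p_lt_half D0 Dm).
by rewrite big_pred1_eq => /(psi_after_yes p_gt0 p_lt_half D0 Dm).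
Qed.

Lemma psi_step x y : (forall u, w u <= w x) -> (forall u, w' u <= w' y) ->
  psi (wtot w') (w' y) * 4 <= psi (wtot w) (w x).
Proof.
move=> x_max y_max; have [_ [heavy_q _]] := step.
have [hq | lq] := boolP (heavy w q).
  have xq : w x = w q by apply/le_anti; rewrite x_max (heavy_max w_gt0 hq).
  have Wx : wtot w <= 2 * w x by rewrite xq -(heavyE w_gt0).
  rewrite [psi (wtot w) _]/psi Wx xq (wtot_bigD1 w q) addrAC subrr add0r.
  by have := psi_step_heavy hq y_max; nra.
have lx : ~~ heavy w x by apply: contra lq => hx; apply: heavy_q; exists x.
rewrite [psi (wtot w) _]/psi -(heavyE w_gt0) (negbTE lx).
have W'0 : 0 <= wtot w' by apply: sumr_ge0 => v _; apply/ltW/step_gt0.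
have := wtot_halves lq; have := psi_le_sqr (wtot w') (w' y).
nra.
Qed.

End Step.

Section Trajectory.
Variables (R : realFieldType) (T : finType) (e : rel T) (p : R).
Variables (w : nat -> T -> R) (q : nat -> T) (a : nat -> option T).
Hypotheses (e_sym : symmetric e) (p_gt0 : 0 < p) (p_lt_half : p < 1 / 2).
Hypothesis w0_gt0 : forall v, 0 < w 0%N v.
Hypothesis steps : forall t, valid_step e p (w t) (q t) (a t) (w t.+1).

Lemma trajectory_gt0 t v : 0 < w t v.
Proof. by elim: t v => // t IH; apply: step_gt0 p_gt0 p_lt_half IH (steps t). Qed.

Lemma psi_decay t x : (forall u, w t u <= w t x) ->
  psi (wtot (w t)) (w t x) * 4 ^+ t <= wtot (w 0%N) ^+ 2.
Proof.
elim: t x => [|t IH] y y_max; first by rewrite expr0 mulr1 psi_le_sqr.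
have [x x_max] := exists_max (w t) y.
apply: le_trans (IH x x_max); rewrite exprS mulrA ler_wpM2r ?exprn_ge0 //.
exact: (psi_step e_sym p_gt0 p_lt_half (@trajectory_gt0 t) (steps t) x_max y_max).
Qed.

End Trajectory.

Theorem lemma5 (R : realFieldType) (T : finType) (e : rel T)
  (e_sym : symmetric e) (e_irr : irreflexive e) (e_conn : connected_graph e)
  (p : R) (hp0 : 0 < p) (hp1 : p < 1 / 2)
  (w : nat -> T -> R) (q : nat -> T) (a : nat -> option T)
  (w0_pos : forall v, 0 < w 0%N v) (w0_tot : wtot (w 0%N) = 1)
  (steps : forall t : nat, valid_step e p (w t) (q t) (a t) (w t.+1)) :
  forall (tau : nat) (x : T), (forall u, w tau u <= w tau x) ->
    \sum_(v | v != x) w tau v <= 1 / 2 ^+ tau.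
Proof.
move=> tau x x_max.
have w_gt0 := trajectory_gt0 hp0 hp1 w0_pos steps tau.
have := psi_decay e_sym hp0 hp1 w0_pos steps x_max.
have := sqr_le_psi (sum_neq_ge0 w_gt0 x) (ltW (w_gt0 x)).
rewrite w0_tot expr1n -wtot_bigD1.
have pow_gt0 : 0 < (2 : R) ^+ tau by apply: exprn_gt0.
have -> : (4 : R) ^+ tau = 2 ^+ tau * 2 ^+ tau by rewrite -exprMn -natrM.
rewrite ler_pdivlMr //.
nra.
Qed.
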